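(* Let $A$ be a finite alphabet of size $m$, and let $w=\mu^{\omega}(a)$ where $a\in A$ and $\mu$ is an $r$-uniform morphism ($r\ge2$) prolongable on $a$; suppose $w$ is aperiodic and uniformly recurrent. Let $t$ be a substring of $w$ such that every length-2 substring of $w$ is a substring of $t$, and let $s$ be a substring of $w$ of the form $s=ftg$ with letters $f,g\in A$. Fix a nonnegative integer $n$ and suppose that $\mu^n(s)$ is a substring of $w$, say $\mu^n(s)=w_{[\gamma,\gamma+|s|\cdot r^n]}$ for some $\gamma$. If $i$ is the remainder of $\gamma$ upon division by $r^n$, then $\gcd(i,r^n)>\frac{r^n}{m^2}$.
   Context: Words are $0$-indexed, and for a word $v$, $v_{[i,j]}$ denotes the substring of $v$ consisting of the letters at indices $i,i+1,\dots,j-1$. A morphism $\mu$ satisfies $\mu(uv)=\mu(u)\mu(v)$ for finite $u$; it is $r$-uniform if $|\mu(b)|=r$ for all $b\in A$; prolongable on $a$ means $\mu(a)$ begins with $a$, and $\mu^{\omega}(a)$ is the infinite word having every $\mu^n(a)$ as a prefix. Aperiodic: no periodic suffix. Uniformly recurrent: for every $a$ there is $b$ such that every length-$a$ substring of $w$ occurs in every length-$b$ substring of $w$. The convention $\gcd(0,r^n)=r^n$ is used. *)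

From mathcomp Require Import all_boot.
Set Implicit Arguments. Unset Strict Implicit. Unset Printing Implicit Defensive.

(* Infinite words over A are functions nat -> A, 0-indexed. *)

(* w_[i,j] : letters at indices i, ..., j-1 *)
Definition subw {A : Type} (w : nat -> A) (i j : nat) : seq A :=
  [seq w k | k <- iota i (j - i)].

Definition morph {A : Type} (mu : A -> seq A) (u : seq A) : seq A :=
  flatten (map mu u).

Definition morphn {A : Type} (mu : A -> seq A) (n : nat) (u : seq A) : seq A :=
  iter n (morph mu) u.

Definition uniform_morph {A : Type} (r : nat) (mu : A -> seq A) : Prop :=
  forall b, size (mu b) = r.

Definition prolongable {A : Type} (mu : A -> seq A) (a : A) : Prop :=
  exists u, mu a = a :: u.

Definition is_mu_omega {A : Type} (mu : A -> seq A) (a : A) (w : nat -> A) : Prop :=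
  forall n, subw w 0 (size (morphn mu n [:: a])) = morphn mu n [:: a].

Definition factor_of {A : Type} (u : seq A) (w : nat -> A) : Prop :=
  exists i, u = subw w i (i + size u).

Definition aperiodic {A : Type} (w : nat -> A) : Prop :=
  ~ (exists p N, 0 < p /\ forall k, N <= k -> w (k + p) = w k).

Definition uniformly_recurrent {A : eqType} (w : nat -> A) : Prop :=
  forall a, exists b, forall i j,
    infix (subw w i (i + a)) (subw w j (j + b)).

From mathcomp Require Import all_boot zify.

Set Implicit Arguments.
Unset Strict Implicit.
Unset Printing Implicit Defensive.

(* Write N = r^n and B b = mu^n(b), so that w is the concatenation of the
   blocks B (w j) placed at the positions j N.  Since mu^n(s) occurs at gamma
   and s contains every length-2 factor of w, each pair of consecutive blocks
   reoccurs at a position congruent to gamma mod N; hence every length-N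
   window of w reoccurs at a position shifted by gamma mod N and, iterating,
   by any multiple of d = gcd(gamma, N) mod N.  So every length-N window of w starting at a multiple
   of d is one of the #|A| words B b.  Reading w as a sequence of length-d
   words, it then has at most #|A| factors of length N/d, and by the
   Morse-Hedlund argument an aperiodic sequence has more than L factors of
   length L.  Thus N < d #|A|, which is stronger than the claim. *)

Section Subwords.
Variables (T : Type) (w : nat -> T).

Lemma subw_addr p L : subw w p (p + L) = map w (iota p L).
Proof. by rewrite /subw addKn. Qed.

Lemma size_subw_addr p L : size (subw w p (p + L)) = L.
Proof. by rewrite subw_addr size_map size_iota. Qed.

Lemma nth_subw x0 p L e : e < L -> nth x0 (subw w p (p + L)) e = w (p + e).
Proof. by move=> lt_eL; rewrite subw_addr (nth_map 0) ?size_iota // nth_iota. Qed.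

Lemma subw_cons p L : subw w p (p + L.+1) = w p :: subw w p.+1 (p.+1 + L).
Proof. by rewrite !subw_addr. Qed.

Lemma subw_split p L1 L2 :
  subw w p (p + (L1 + L2)) = subw w p (p + L1) ++ subw w (p + L1) (p + L1 + L2).
Proof. by rewrite !subw_addr iotaD map_cat. Qed.

Lemma subw_take_drop p L e M : e + M <= L ->
  take M (drop e (subw w p (p + L))) = subw w (p + e) (p + e + M).
Proof.
move=> le_eML; rewrite !subw_addr -map_drop -map_take drop_iota take_iota.
by congr (map w (iota _ _)); lia.
Qed.

Lemma take_subw p L M : M <= L -> take M (subw w p (p + L)) = subw w p (p + M).
Proof. by move=> le_ML; rewrite !subw_addr -map_take take_iota (minn_idPl le_ML). Qed.

Lemma subw_flatten_uniform (X : Type) (F : X -> seq T) N (u : seq X) c :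
  (forall x, size (F x) = N) -> flatten (map F u) = subw w c (c + size u * N) ->
  forall k x0, k < size u -> subw w (c + k * N) (c + k * N + N) = F (nth x0 u k).
Proof.
move=> sizeF; elim: u c => [//|x u IHu] c /=.
rewrite mulSn subw_split => eq_cat.
have Fx : F x = subw w c (c + N).
  by have := congr1 (take N) eq_cat; rewrite !take_size_cat ?sizeF ?size_subw_addr.
have Fu : flatten (map F u) = subw w (c + N) (c + N + size u * N).
  by have := congr1 (drop N) eq_cat; rewrite !drop_size_cat ?sizeF ?size_subw_addr.
case=> [|k] x0 lt_ku; first by rewrite mul0n addn0 Fx.
by rewrite mulSn addnA (IHu _ Fu k x0).
Qed.

End Subwords.

Lemma exists_step_nonincreasing (c : nat -> nat) L :
  c L < c 0 + L -> exists2 l, l < L & c l.+1 <= c l.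
Proof.
elim: L => [|L IHL] lt_c; first by rewrite addn0 ltnn in lt_c.
case: (leqP (c L.+1) (c L)) => [le_c | lt_cL]; first by exists L.
by have [|l lt_lL le_c] := IHL; [lia | exists l; first exact: leqW].
Qed.

Lemma inj_in_undup_map (U V : eqType) (h : U -> V) (s : seq U) :
  size (undup s) <= size (undup (map h s)) -> {in s &, injective h}.
Proof.
move=> le_s x y xs ys eq_h; set Z := undup s.
have uniq_hZ : uniq (map h Z).
  apply: (leq_size_uniq (undup_uniq (map h s))); last by rewrite size_map.
  by move=> z; rewrite mem_undup => /mapP[u us ->]; rewrite map_f ?mem_undup.
have [xZ yZ] : x \in Z /\ y \in Z by rewrite !mem_undup.
have := uniqP (h x) uniq_hZ (index x Z) (index y Z).
rewrite !inE size_map !index_mem !(nth_map x) ?index_mem // !nth_index //.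
by move=> /(_ xZ yZ eq_h) eq_idx; rewrite -(nth_index x xZ) eq_idx nth_index.
Qed.

Lemma exists_prefix_determined (I : finType) (T : eqType) (F : I -> seq T) L :
  0 < #|I| <= L -> exists2 l, l < L &
    forall i j, take l (F i) = take l (F j) -> take l.+1 (F i) = take l.+1 (F j).
Proof.
(* The number of distinct length-l prefixes grows from 1 at l = 0 to at most
   #|I| <= L at l = L, so it fails to grow at some l < L. *)
case/andP=> I_gt0 le_IL.
pose prefixes l := [seq take l (F i) | i <- enum I].
have [|l lt_lL le_c] := @exists_step_nonincreasing (fun l => size (undup (prefixes l))) L.
  have c0 : 0 < size (undup (prefixes 0)).
    rewrite lt0n size_eq0; apply/eqP => /undup_nil /(congr1 size).
    by rewrite size_map -cardE /= => I0; rewrite I0 in I_gt0.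
  have cL : size (undup (prefixes L)) <= #|I|.
    by rewrite (leq_trans (size_undup _)) // size_map cardE.
  lia.
exists l => // i j eq_l.
have mem_prefixes k : take l.+1 (F k) \in prefixes l.+1.
  by apply: (map_f (fun i => take l.+1 (F i))); rewrite mem_enum.
have := @inj_in_undup_map _ _ (take l) (prefixes l.+1).
rewrite -map_comp (@eq_map _ _ _ (fun i => take l (F i))) => [inj_take | k /=].
  by apply: (inj_take le_c _ _ (mem_prefixes i) (mem_prefixes j)); rewrite !take_takel.
by rewrite take_takel.
Qed.

Lemma exists_repeat (I : finType) (X : Type) (W : nat -> X) (F : I -> X) :
  (forall k, exists i, W k = F i) -> exists k k', k < k' /\ W k = W k'.
Proof.
move=> WF; have /fin_all_exists[g Wg] : forall k : 'I_#|I|.+1, exists i, W k = F i.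
  by move=> k; apply: WF.
have /injectivePn[x [y neq_xy eq_g]] : ~~ injectiveb g.
  by apply/injectiveP => /leq_card; rewrite card_ord ltnn.
have eq_W : W x = W y by rewrite Wg Wg eq_g.
case: (ltngtP x y) => [lt_xy | lt_yx | /val_inj eq_xy]; first by exists x, y.
  by exists y, x.
by rewrite eq_xy eqxx in neq_xy.
Qed.

Lemma eq_shift_of_window_ext (T : Type) (v : nat -> T) l k k' :
  (forall p p', subw v p (p + l) = subw v p' (p' + l) ->
     subw v p (p + l.+1) = subw v p' (p' + l.+1)) ->
  subw v k (k + l) = subw v k' (k' + l) -> forall m, v (k + m) = v (k' + m).
Proof.
move=> ext eq0.
have eqm m : subw v (k + m) (k + m + l.+1) = subw v (k' + m) (k' + m + l.+1).
  elim: m => [|m IHm]; first by rewrite !addn0; exact: ext.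
  by apply: ext; move: IHm; rewrite !subw_cons !addnS => -[].
by move=> m; move: (eqm m); rewrite !subw_cons => -[].
Qed.

(* A variant of the Morse-Hedlund theorem. *)
Lemma few_windows_not_aperiodic (I : finType) (T : eqType) (v : nat -> T)
    (F : I -> seq T) L :
  #|I| <= L -> (forall k, exists i, subw v k (k + L) = F i) -> ~ aperiodic v.
Proof.
move=> le_IL windowsF; apply.
have I_gt0 : 0 < #|I| by have [i _] := windowsF 0; apply/card_gt0P; exists i.
have [l lt_lL detF] := @exists_prefix_determined _ _ F L (introT andP (conj I_gt0 le_IL)).
have ext p p' : subw v p (p + l) = subw v p' (p' + l) ->
    subw v p (p + l.+1) = subw v p' (p' + l.+1).
  have [i Fi] := windowsF p; have [j Fj] := windowsF p'.
  by rewrite -!(take_subw v _ lt_lL) -!(take_subw v _ (ltnW lt_lL)) Fi Fj => /detF.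
have [k [k' [lt_kk' eq_kk']]] := exists_repeat windowsF.
have eq_shift := eq_shift_of_window_ext ext.
exists (k' - k), k; split; first by rewrite subn_gt0.
move=> p le_kp; have := eq_shift k k' _ (p - k).
rewrite -!(take_subw v _ (ltnW lt_lL)) eq_kk' subnKC // => /(_ erefl) ->.
by congr (v _); lia.
Qed.

Section Blocks.
Variables (T : Type) (w : nat -> T) (d : nat).

Definition blocks (k : nat) : seq T := subw w (k * d) (k * d + d).

Lemma aperiodic_blocks : 0 < d -> aperiodic w -> aperiodic blocks.
Proof.
move=> d_gt0 w_aper [p [N0 [p_gt0 per]]]; apply: w_aper.
exists (p * d), (N0 * d); split; first by rewrite muln_gt0 p_gt0.
move=> k le_k; have le_N0 : N0 <= k %/ d by rewrite leq_divRL.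
have := congr1 (nth (w 0) ^~ (k %% d)) (per _ le_N0).
by rewrite /blocks !nth_subw ?ltn_mod // mulnDl -addnA [p * d + _]addnC addnA -!divn_eq.
Qed.

Lemma subw_blocks k L :
  subw blocks k (k + L) = reshape (nseq L d) (subw w (k * d) (k * d + L * d)).
Proof.
elim: L k => [|L IHL] k; first by rewrite !subw_addr.
rewrite subw_cons IHL [k.+1 * d]mulSnr [L.+1 * d]mulSn subw_split /=.
by rewrite take_size_cat ?drop_size_cat ?size_subw_addr.
Qed.

End Blocks.

Section UniformMorphism.
Variables (A : Type) (r : nat) (mu : A -> seq A).

Lemma morphnD m n u : morphn mu (m + n) u = morphn mu m (morphn mu n u).
Proof. exact: iterD. Qed.

Lemma morphn_cat n u v : morphn mu n (u ++ v) = morphn mu n u ++ morphn mu n v.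
Proof.
elim: n => [//|n IHn].
by rewrite /morphn !iterS -!/(morphn mu n _) IHn /morph map_cat flatten_cat.
Qed.

Lemma morphn_flatten n u : morphn mu n u = flatten [seq morphn mu n [:: b] | b <- u].
Proof.
elim: u => [|b u IHu] /=; last by rewrite -cat1s morphn_cat IHu.
by elim: n => [//|n IHn]; rewrite /morphn iterS -/(morphn mu n _) IHn.
Qed.

Hypothesis mu_uniform : uniform_morph r mu.

Lemma size_morphn n u : size (morphn mu n u) = r ^ n * size u.
Proof.
elim: n u => [|n IHn] u; first by rewrite mul1n.
rewrite -addn1 morphnD IHn /morph size_flatten /shape -map_comp.
rewrite (@eq_map _ _ _ (fun _ => r)) => [|b /=]; last exact: mu_uniform.
rewrite expnD expn1 -mulnA; congr (_ * _).
by elim: u {IHn} => [|b u IHu] /=; rewrite ?muln0 // IHu mulnS.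
Qed.

Variables (a : A) (w : nat -> A).
Hypotheses (r_gt1 : 1 < r) (w_fixed : is_mu_omega mu a w).

Lemma mu_omega_block n j : subw w (j * r ^ n) (j * r ^ n + r ^ n) = morphn mu n [:: w j].
Proof.
pose P m := morphn mu m [:: a].
have size_P m : size (P m) = r ^ m by rewrite size_morphn muln1.
have lt_jP : j < size (P j) by rewrite size_P ltn_expl.
have P_nj :
    flatten [seq morphn mu n [:: b] | b <- P j] = subw w 0 (0 + size (P j) * r ^ n).
  rewrite -morphn_flatten -morphnD add0n size_P -expnD [j + n]addnC -(size_P (n + j)).
  exact/esym/w_fixed.
have size_block b : size (morphn mu n [:: b]) = r ^ n by rewrite size_morphn muln1.
rewrite (subw_flatten_uniform size_block P_nj a lt_jP).
by congr (morphn _ _ [:: _]); rewrite /P -(w_fixed j) -[size _]add0n nth_subw.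
Qed.

End UniformMorphism.

Section ShiftedWindows.
Variables (A : finType) (w : nat -> A) (B : A -> seq A) (N gamma : nat) (s : seq A).
Hypotheses (N_gt0 : 0 < N)
  (w_blocks : forall j, subw w (j * N) (j * N + N) = B (w j))
  (s_blocks : forall k, k < size s ->
     subw w (gamma + k * N) (gamma + k * N + N) = B (nth (w 0) s k))
  (s_pairs : forall j, infix [:: w j; w j.+1] s).

Lemma pair_window_recurs j : exists c, c = gamma %[mod N] /\
  subw w c (c + (N + N)) = subw w (j * N) (j * N + (N + N)).
Proof.
have /infixP[s1 [s3 def_s]] := s_pairs j.
have lt_s1 : (size s1).+1 < size s by rewrite def_s !size_cat /=; lia.
have nth_s1 : nth (w 0) s (size s1) = w j by rewrite def_s nth_cat ltnn subnn.
have nth_s1S : nth (w 0) s (size s1).+1 = w j.+1.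
  by rewrite def_s nth_cat ltnNge leqnSn /= subSn // subnn.
exists (gamma + size s1 * N); split; first by rewrite addnC modnMDl.
rewrite !subw_split s_blocks ?(ltnW lt_s1) // -[gamma + _ + N]addnA -mulSnr s_blocks //.
by rewrite w_blocks -mulSnr w_blocks nth_s1 nth_s1S.
Qed.

Lemma shift_window p : exists p', p' = p + gamma %[mod N] /\
  subw w p' (p' + N) = subw w p (p + N).
Proof.
have [c [c_mod eq_c]] := pair_window_recurs (p %/ N).
have lt_pN : p %% N < N := ltn_pmod p N_gt0.
exists (c + p %% N); split; first by rewrite -modnDml c_mod modnDml modnDmr addnC.
have le_window : p %% N + N <= N + N by rewrite leq_add2r ltnW.
by rewrite -(subw_take_drop _ _ le_window) eq_c subw_take_drop // -divn_eq.
Qed.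

Lemma iterate_shift l p : exists p', p' = p + l * gamma %[mod N] /\
  subw w p' (p' + N) = subw w p (p + N).
Proof.
elim: l => [|l [p1 [p1_mod eq_p1]]]; first by exists p; rewrite mul0n addn0.
have [p2 [p2_mod eq_p2]] := shift_window p1.
exists p2; split; last by rewrite eq_p2.
by rewrite p2_mod -modnDml p1_mod modnDml mulSnr addnA.
Qed.

Lemma gcd_aligned_window k : exists q,
  subw w (k * gcdn gamma N) (k * gcdn gamma N + N) = B (w q).
Proof.
have [a _ dvd_N] := Bezoutr gamma N_gt0.
have [p' [p'_mod eq_p']] := iterate_shift (k * a) (k * gcdn gamma N).
have p'_mod0 : p' %% N = 0.
  by rewrite p'_mod -mulnA -mulnDr; apply/eqP; exact: dvdn_mull.
have def_p' : p' = p' %/ N * N by rewrite {1}(divn_eq p' N) p'_mod0 addn0.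
by exists (p' %/ N); rewrite -eq_p' -w_blocks -def_p'.
Qed.

Lemma lt_gcd_card : aperiodic w -> N < gcdn gamma N * #|A|.
Proof.
move=> w_aper; set d := gcdn gamma N; pose L := N %/ d.
have d_gt0 : 0 < d by rewrite gcdn_gt0 N_gt0 orbT.
have N_eq : L * d = N by rewrite divnK ?dvdn_gcdr.
suff lt_LA : L < #|A| by rewrite -N_eq mulnC ltn_mul2l d_gt0.
rewrite ltnNge; apply/negP => le_AL.
pose F b := reshape (nseq L d) (B b).
apply: (few_windows_not_aperiodic (F := F) le_AL _ (aperiodic_blocks d_gt0 w_aper)).
move=> k; have [q eq_q] := gcd_aligned_window k.
by exists (w q); rewrite subw_blocks N_eq eq_q.
Qed.

End ShiftedWindows.

Theorem lemma8 (A : finType) (r : nat) (mu : A -> seq A) (a : A) (w : nat -> A)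
  (t : seq A) (f g : A) (n gamma : nat) :
  2 <= r ->
  uniform_morph r mu ->
  prolongable mu a ->
  is_mu_omega mu a w ->
  aperiodic w ->
  uniformly_recurrent w ->
  factor_of t w ->
  (forall j, infix (subw w j (j + 2)) t) ->
  factor_of (f :: t ++ [:: g]) w ->
  morphn mu n (f :: t ++ [:: g]) =
    subw w gamma (gamma + size (f :: t ++ [:: g]) * r ^ n) ->
  r ^ n < gcdn (gamma %% r ^ n) (r ^ n) * #|A| ^ 2.
Proof.
move=> r_gt1 mu_uniform _ w_fixed w_aper _ _ t_pairs _.
set s := f :: t ++ [:: g]; set N := r ^ n; pose B b := morphn mu n [:: b].
rewrite morphn_flatten => s_image.
have N_gt0 : 0 < N by rewrite expn_gt0 ltnW.
have size_B b : size (B b) = N by rewrite (size_morphn mu_uniform) muln1.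
have w_blocks j : subw w (j * N) (j * N + N) = B (w j) :=
  mu_omega_block mu_uniform r_gt1 w_fixed n j.
have s_blocks k : k < size s ->
    subw w (gamma + k * N) (gamma + k * N + N) = B (nth (w 0) s k).
  exact: subw_flatten_uniform size_B s_image k (w 0).
have s_pairs j : infix [:: w j; w j.+1] s.
  apply: (@infix_trans _ t); last by rewrite /s -cat1s infix_infix.
  by have := t_pairs j; rewrite subw_addr.
have := lt_gcd_card N_gt0 w_blocks s_blocks s_pairs w_aper.
rewrite gcdn_modl => /leq_trans; apply; rewrite leq_mul2l -mulnn leq_pmulr ?orbT //.
by apply/card_gt0P; exists a.
Qed.
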